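(* Let $S=\{1,\ldots,n\}$, let $\boldsymbol{P}(S)$ be the set of partitions of $S$, and let $\varrho(\mathcal{C})\ge0$ for $\mathcal{C}\in\boldsymbol{P}(S)$. Let $(\Sigma_t)_{t\ge0}$ be the partitioning process, i.e. the continuous-time Markov chain on $\boldsymbol{P}(S)$ with rate matrix $Q$ given as follows: for $\mathcal{B}\ne\mathcal{A}$, $Q(\mathcal{A},\mathcal{B})=\varrho^{A}_{\mathcal{B}_A}$ if $\mathcal{B}=(\mathcal{A}\setminus\{A\})\cup\mathcal{B}_A$ for some block $A\in\mathcal{A}$ and some partition $\mathcal{B}_A\ne\{A\}$ of $A$, and $Q(\mathcal{A},\mathcal{B})=0$ otherwise; and $Q(\mathcal{A},\mathcal{A})=-\sum_{\mathcal{C}\ne\mathcal{A}}Q(\mathcal{A},\mathcal{C})$. Here $\varrho^{A}_{\mathcal{B}_A}=\sum_{\mathcal{C}\in\boldsymbol{P}(S):\,\mathcal{C}|_A=\mathcal{B}_A}\varrho(\mathcal{C})$. Define $N:\mathbb{R}^{\boldsymbol{P}(S)}\to\mathbb{R}$ by $N(p)=\sum_{\mathcal{A}\in\boldsymbol{P}(S)}p(\mathcal{A})|\mathcal{A}|$. Then the law $p_t$ of $\Sigma_t$, which satisfies $\dot p_t=\sum_{\mathcal{A},\mathcal{B}}p_t(\mathcal{A})Q(\mathcal{A},\mathcal{B})(\mathcal{B}-\mathcal{A})$, satisfies a generalised gradient system with respect to $N$: $\dot p_t=K(p_t)\nabla N(p_t)$, where $K$ takes values in the symmetric positive semi-definite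 matrices, is continuous on the set of probability vectors on $\boldsymbol{P}(S)$ and smooth on its interior.
   Context: $|\mathcal{A}|$ is the number of blocks of $\mathcal{A}$. For a partition $\mathcal{C}$ of $S$ and $U\subseteq S$, $\mathcal{C}|_U=\{C\cap U: C\in\mathcal{C}\}\setminus\{\varnothing\}$ is the induced partition of $U$. Vectors in $\mathbb{R}^{\boldsymbol{P}(S)}$ are formal sums $\sum p(\mathcal{A})\mathcal{A}$ with each partition identified with a standard basis vector; $\nabla$ is the Euclidean gradient. *)

From HB Require Import structures.
From mathcomp Require Import all_boot all_order all_algebra.
From mathcomp Require Import all_classical all_reals all_analysis.
Set Implicit Arguments. Unset Strict Implicit. Unset Printing Implicit Defensive.
Import Order.TTheory GRing.Theory Num.Theory.
Import numFieldNormedType.Exports.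
Local Open Scope ring_scope.

(* S = {1,..,n} is modelled by 'I_n.  A partition of S is a set of nonempty,
   pairwise disjoint blocks covering S (finset's [partition]). *)
Definition part (n : nat) := {P : {set {set 'I_n}} | finset.partition P [set: 'I_n]}.

Definition restr n (C : {set {set 'I_n}}) (U : {set 'I_n}) : {set {set 'I_n}} :=
  [set B :&: U | B in C] :\ finset.set0.

Definition rho_ind (R : realType) n (rho : part n -> R)
    (A : {set 'I_n}) (BA : {set {set 'I_n}}) : R :=
  \sum_(C : part n | restr (val C) A == BA) rho C.

(* off-diagonal rate: rho^{A0}_{B_A} when B = (A \ {A0}) u B_A for a block A0
   of A and a partition B_A <> {A0} of A0; 0 if no such (A0, B_A) exists.
   (Such a pair is unique when it exists, so the sum has at most one term.) *)
Definition rate_off (R : realType) n (rho : part n -> R) (A B : part n) : R :=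
  \sum_(A0 in val A)
    \sum_(BA : {set {set 'I_n}} |
          [&& finset.partition BA A0, BA != [set A0] & val B == (val A :\ A0) :|: BA])
      rho_ind rho A0 BA.

Definition rate (R : realType) n (rho : part n -> R) (A B : part n) : R :=
  if A == B then - \sum_(C : part n | C != A) rate_off rho A C
  else rate_off rho A B.

(* R^{P(S)} is represented as row vectors indexed by 'I_#|part n| via enum_rank *)
Definition np n := #|{: part n}|.

Definition ev (R : realType) n (A : part n) : 'rV[R]_(np n) :=
  delta_mx 0 (enum_rank A).

Definition pv (R : realType) n (p : 'rV[R]_(np n)) (A : part n) : R :=
  p 0 (enum_rank A).

Definition fwd (R : realType) n (rho : part n -> R) (p : 'rV[R]_(np n))
    : 'rV[R]_(np n) :=
  \sum_(A : part n) \sum_(B : part n) (pv p A * rate rho A B) *: (ev R B - ev R A).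

Definition Nfun (R : realType) n (p : 'rV[R]_(np n)) : R :=
  \sum_(A : part n) pv p A * #|val A|%:R.

Definition gradient (R : realType) m (f : 'rV[R]_m -> R) (p : 'rV[R]_m)
    : 'rV[R]_m :=
  \row_i ('D_(delta_mx 0 i) f p).

Definition prob_vectors (R : realType) m : set 'rV[R]_m :=
  fun p => (forall i, 0 <= p 0 i) /\ \sum_i p 0 i = 1.

Definition pos_orthant (R : realType) m : set 'rV[R]_m :=
  fun p => forall i, 0 < p 0 i.

Fixpoint iterD (R : realType) (V W : normedModType R) (vs : seq V) (f : V -> W)
    : V -> W :=
  match vs with
  | [::] => f
  | v :: vs' => fun x => 'D_v (iterD vs' f) x
  end.

Definition smooth_on (R : realType) (V W : normedModType R) (U : set V)
    (f : V -> W) : Prop :=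
  forall vs : seq V,
    (forall v x, U x -> derivable (iterD vs f) x v) /\
    (forall x, U x -> {for x, continuous (iterD vs f)}).

Definition symmetric_mx (R : realType) m (M : 'M[R]_m) : Prop := M^T = M.

Definition psd_mx (R : realType) m (M : 'M[R]_m) : Prop :=
  forall v : 'cV[R]_m, 0 <= (v^T *m M *m v) 0 0.

(* Every transition of the partitioning process splits a block nontrivially,
   so it strictly increases the number of blocks and the rate factors as
   Q(A,B) = w(A,B) (|B| - |A|) with w >= 0.  Put
   K(p) = sum_A p(A) sum_B w(A,B) (e_B - e_A)^T (e_B - e_A):
   a nonnegative combination of Gram matrices, hence symmetric positive
   semi-definite, and linear in p, hence continuous and smooth.  As N is
   linear with gradient (|B|)_B, (e_B - e_A) grad N = |B| - |A|, and
   K(p) grad N reassembles sum_{A,B} p(A) Q(A,B) (e_B - e_A). *)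

From Pilot Require Import Defs.
From HB Require Import structures.
From mathcomp Require Import all_boot all_order all_algebra.
From mathcomp Require Import all_classical all_reals all_analysis.
Import Order.TTheory GRing.Theory Num.Theory.
Import numFieldNormedType.Exports.
Set Implicit Arguments.
Unset Strict Implicit.
Unset Printing Implicit Defensive.

Local Open Scope ring_scope.

Section LinearMaps.
Variables (R : realType) (V W : normedModType R) (f : {linear V -> W}).
Local Open Scope classical_set_scope.

Lemma is_derive_linear (a v : V) : is_derive a v f (f v).
Proof.
have quotient_cst :
    \forall h \near 0^', h^-1 *: ((f \o shift a) (h *: v) - f a) = f v.
  near=> h; rewrite /= [f (_ + _)]linearD addrK linearZ scalerA.
  rewrite mulVf ?scale1r //.
  near: h; exact: nbhs_dnbhs_neq.
split; first exact: (is_cvg_near_cst (f v)).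
exact: lim_near_cst.
Unshelve. all: by end_near. Qed.

Lemma iterD_linear (vs : seq V) :
  Defs.iterD vs f = f \/ exists c, Defs.iterD vs f = cst c.
Proof.
elim: vs => [|v vs [IH|[c IH]]] /=; first by left.
  right; exists (f v).
  by apply/funext => x; rewrite IH; have [_ ->] := is_derive_linear x v.
right; exists 0; apply/funext => x.
by rewrite IH derive_cst.
Qed.

Lemma smooth_on_linear (U : set V) : continuous f -> smooth_on U f.
Proof.
move=> f_cont vs; have [->|[c ->]] := iterD_linear vs; split => [v x _|x _].
- by have [] := is_derive_linear x v.
- exact: f_cont.
- exact: derivable_cst.
- exact: cst_continuous.
Qed.

End LinearMaps.

Section CoordinateCombination.
Variables (R : realType) (T : finType) (m : nat) (rk : T -> 'I_m).
Variables (W : normedModType R) (M : T -> W).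

Definition coord_comb (p : 'rV[R]_m) : W := \sum_A p 0 (rk A) *: M A.

Fact coord_comb_is_semilinear : semilinear coord_comb.
Proof.
split=> [c p|p q]; rewrite /coord_comb ?scaler_sumr -?big_split.
  by apply: eq_bigr => A _; rewrite !mxE scalerA.
by apply: eq_bigr => A _; rewrite !mxE scalerDl.
Qed.

HB.instance Definition _ :=
  GRing.isSemilinear.Build R 'rV[R]_m W _ coord_comb coord_comb_is_semilinear.

Lemma continuous_coord_comb : continuous coord_comb.
Proof.
apply: continuous_big => [|A _]; first exact: add_continuous.
move=> p; apply: continuousZr_tmp; exact: coord_continuous.
Qed.

Lemma coord_comb_delta A : injective rk -> coord_comb (delta_mx 0 (rk A)) = M A.
Proof.
move=> rk_inj; rewrite /coord_comb (bigD1 A) //= mxE !eqxx scale1r.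
rewrite big1 ?addr0 // => B neBA.
by rewrite mxE (inj_eq rk_inj) (negbTE neBA) andbF scale0r.
Qed.

Lemma derive_coord_comb_delta p A :
  injective rk -> 'D_(delta_mx 0 (rk A)) coord_comb p = M A.
Proof.
have [_ ->] := is_derive_linear coord_comb p (delta_mx 0 (rk A)).
exact: coord_comb_delta.
Qed.

End CoordinateCombination.

Section PsdMatrices.
Variables (R : realType) (m : nat).

Lemma symmetric_mx_gram (d : 'rV[R]_m) : symmetric_mx (d^T *m d).
Proof. by rewrite /symmetric_mx trmx_mul trmxK. Qed.

Lemma psd_mx_gram (d : 'rV[R]_m) : psd_mx (d^T *m d).
Proof.
move=> v; rewrite mulmxA -trmx_mul -mulmxA mxE big_ord1 !mxE -expr2.
exact: sqr_ge0.
Qed.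

Variables (I : finType) (c : I -> R) (M : I -> 'M[R]_m).

Lemma symmetric_mx_comb :
  (forall i, symmetric_mx (M i)) -> symmetric_mx (\sum_i c i *: M i).
Proof.
move=> Msym; rewrite /symmetric_mx linear_sum; apply: eq_bigr => i _.
by rewrite linearZ /= Msym.
Qed.

Lemma psd_mx_comb :
  (forall i, 0 <= c i) -> (forall i, psd_mx (M i)) ->
  psd_mx (\sum_i c i *: M i).
Proof.
move=> c_ge0 Mpsd v; rewrite mulmx_sumr mulmx_suml summxE.
apply: sumr_ge0 => i _.
by rewrite -scalemxAr -scalemxAl mxE mulr_ge0 ?c_ge0 ?Mpsd.
Qed.

End PsdMatrices.

Section RefineBlock.
Variables (T : finType) (D A0 : {set T}) (P Q : {set {set T}}).
Hypotheses (partP : finset.partition P D) (A0P : A0 \in P).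
Hypotheses (partQ : finset.partition Q A0) (Q_neq1 : Q != [set A0]).

Lemma refine_block_disjoint : [disjoint P :\ A0 & Q].
Proof.
have /and3P[_ trivP set0P] := partP; have /and3P[/eqP covQ _ set0Q] := partQ.
apply/pred0P => X /=; apply/negP => /andP[/setD1P[XA0 XP] XQ].
have [x Xx] : exists x, x \in X by apply/set0Pn; apply: contraNneq set0Q => <-.
have XsubA0 : X \subset A0 by rewrite -covQ; exact: finset.bigcup_sup.
have := finset.trivIsetP trivP X A0 XP A0P XA0.
by move/disjointFr => /(_ x Xx); rewrite (fintype.subsetP XsubA0).
Qed.

Lemma refine_block_card_gt1 : (1 < #|Q|)%N.
Proof.
have /and3P[/eqP covQ _ _] := partQ; have /and3P[_ _ set0P] := partP.
rewrite ltnNge leq_eqVlt ltnS leqn0 cards_eq0.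
apply/negP => /orP[/cards1P[X QX]|/eqP Q0].
  by move: Q_neq1; rewrite QX -covQ QX finset.cover1 eqxx.
by move: A0P set0P; rewrite -covQ Q0 /finset.cover big_set0 => ->.
Qed.

Lemma card_refine_block : (#|P| < #|(P :\ A0) :|: Q|)%N.
Proof.
rewrite (cardsD1 A0 P) A0P cardsU (disjoint_setI0 refine_block_disjoint).
by rewrite cards0 subn0 -addn1 ltn_add2l refine_block_card_gt1.
Qed.

End RefineBlock.

Section PartitioningProcess.
Variables (R : realType) (n : nat) (rho : part n -> R).
Hypothesis rho_ge0 : forall C : part n, 0 <= rho C.

Lemma rate_off_ge0 (A B : part n) : 0 <= rate_off rho A B.
Proof. by do 3!apply: sumr_ge0 => ? _. Qed.

Lemma rate_off_card_lt (A B : part n) :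
  rate_off rho A B != 0 -> (#|val A| < #|val B|)%N.
Proof.
apply: contraR => not_lt; apply/eqP; apply: big1 => A0 A0A.
apply: big1 => Q /and3P[partQ Q_neq1 /eqP eqB].
by move: not_lt; rewrite eqB (card_refine_block (valP A)).
Qed.

(* When the rate vanishes the denominator may too; then [x / 0 = 0] gives
   weight [0], which is harmless. *)
Definition jump_weight (A B : part n) : R :=
  rate_off rho A B / (#|val B|%:R - #|val A|%:R).

Lemma jump_weight_ge0 (A B : part n) : 0 <= jump_weight A B.
Proof.
rewrite /jump_weight.
have [->|/rate_off_card_lt/ltnW lt_AB] := eqVneq (rate_off rho A B) 0.
  by rewrite mul0r.
by rewrite divr_ge0 ?rate_off_ge0 // subr_ge0 ler_nat.
Qed.

Lemma jump_weightK (A B : part n) :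
  jump_weight A B * (#|val B|%:R - #|val A|%:R) = rate_off rho A B.
Proof.
rewrite /jump_weight.
have [->|/rate_off_card_lt lt_AB] := eqVneq (rate_off rho A B) 0.
  by rewrite !mul0r.
by rewrite divfK // subr_eq0 eqr_nat gtn_eqF.
Qed.

Definition jump (A B : part n) : 'rV[R]_(np n) := ev R B - ev R A.

Definition onsager_block (A : part n) : 'M[R]_(np n) :=
  \sum_B jump_weight A B *: ((jump A B)^T *m jump A B).

Definition onsager : 'rV[R]_(np n) -> 'M[R]_(np n) :=
  coord_comb (@enum_rank (part n)) onsager_block.

Lemma symmetric_onsager (p : 'rV[R]_(np n)) : symmetric_mx (onsager p).
Proof.
apply: symmetric_mx_comb => A; apply: symmetric_mx_comb => B.
exact: symmetric_mx_gram.
Qed.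

Lemma psd_onsager (p : 'rV[R]_(np n)) :
  (forall i, 0 <= p 0 i) -> psd_mx (onsager p).
Proof.
move=> p_ge0; apply: psd_mx_comb => // A; apply: psd_mx_comb => B.
  exact: jump_weight_ge0.
exact: psd_mx_gram.
Qed.

Lemma Nfun_coord_comb :
  @Nfun R n = coord_comb (@enum_rank (part n)) (fun C => #|val C|%:R : R^o).
Proof. by []. Qed.

Lemma derive_Nfun_delta (p : 'rV[R]_(np n)) (A : part n) :
  'D_(delta_mx 0 (enum_rank A)) (@Nfun R n) p = #|val A|%:R.
Proof.
by rewrite Nfun_coord_comb derive_coord_comb_delta //; exact: enum_rank_inj.
Qed.

Lemma gradient_Nfun_jump (p : 'rV[R]_(np n)) (A B : part n) :
  gradient (@Nfun R n) p *m (jump A B)^T = (#|val B|%:R - #|val A|%:R)%:M.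
Proof.
apply/matrixP => i j; rewrite !ord1 /jump /ev linearB /= mulmxBr !trmx_delta.
by rewrite -!colE !mxE !derive_Nfun_delta.
Qed.

Lemma fwd_onsager (p : 'rV[R]_(np n)) :
  fwd rho p = (onsager p *m (gradient (@Nfun R n) p)^T)^T.
Proof.
rewrite trmx_mul trmxK symmetric_onsager /onsager /coord_comb /fwd mulmx_sumr.
apply: eq_bigr => A _; rewrite -scalemxAr /onsager_block mulmx_sumr scaler_sumr.
apply: eq_bigr => B _.
rewrite -scalemxAr mulmxA gradient_Nfun_jump mul_scalar_mx !scalerA.
have [<-|neqAB] := eqVneq A B; first by rewrite /jump subrr !scaler0.
by rewrite /rate (negbTE neqAB) -mulrA jump_weightK.
Qed.

End PartitioningProcess.

Local Open Scope classical_set_scope.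

Theorem corollary5p3 (R : realType) (n : nat) (rho : part n -> R)
    (rho_ge0 : forall C : part n, 0 <= rho C) :
  exists K : 'rV[R]_(np n) -> 'M[R]_(np n),
    (forall p, prob_vectors p -> symmetric_mx (K p) /\ psd_mx (K p)) /\
    {within prob_vectors (R:=R) (m:=np n), continuous K} /\
    smooth_on (pos_orthant (R:=R) (m:=np n)) K /\
    (forall p, prob_vectors p ->
       fwd rho p = (K p *m (gradient (@Nfun R n) p)^T)^T).
Proof.
exists (onsager rho); split; first by move=> p [p_ge0 _]; split;
  [exact: symmetric_onsager | exact: psd_onsager].
have onsager_cont : continuous (onsager rho) by exact: continuous_coord_comb.
split; first exact: continuous_subspaceT.
split; first exact: smooth_on_linear.
by move=> p _; exact: fwd_onsager.
Qed.
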